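(* For $n=2,3,\dots$ let $\Omega_n=\{1,\dots,n\}$ and $\mathcal P_n=\mathcal P(\Omega_n)$. Let $\{\gamma_n\}_{n\ge2}$ be given, where $\gamma_n$ maps each $p\in\mathcal P_n$ continuously to a bilinear form $\gamma_{n,p}$ on $\mathbb R^{\Omega_n}$. The following are equivalent: (i) there is $c\in\mathbb R$ with $\gamma_{n,p}=c\,\mathrm{Cov}_p$ for all $n$ and all $p\in\mathcal P_n$; (ii) both (ii-1) $\gamma_{n,p}(A,1)=0$ for all $n$, $p\in\mathcal P_n$, $A\in\mathbb R^{\Omega_n}$ (where $1$ is the constant function), and (ii-2) for all $m\le n$ and every surjection $F:\Omega_n\to\Omega_m$, $$\gamma_{m,p^F}(A,B)=\gamma_{n,p}(A\circ F,B\circ F)\quad\forall p\in\mathcal P_n,\ \forall A,B\in\mathbb R^{\Omega_m}.$$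
   Context: $\mathcal P(\Omega)$ is the set of strictly positive probability distributions on a finite set $\Omega$. For $p\in\mathcal P_n$ and a surjection $F:\Omega_n\to\Omega_m$, $p^F\in\mathcal P_m$ is defined by $p^F(x)=\sum_{y\in F^{-1}(x)}p(y)$. $\mathrm{Cov}_p(A,B)=\sum_\omega p(\omega)(A(\omega)-\langle A\rangle_p)(B(\omega)-\langle B\rangle_p)$ with $\langle A\rangle_p=\sum_\omega p(\omega)A(\omega)$. *)

From HB Require Import structures.
From mathcomp Require Import all_boot all_order all_algebra.
From mathcomp Require Import all_classical all_reals all_analysis.
Set Implicit Arguments. Unset Strict Implicit. Unset Printing Implicit Defensive.
Import Order.TTheory GRing.Theory Num.Theory.
Import numFieldNormedType.Exports.
Local Open Scope ring_scope.
Local Open Scope classical_set_scope.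

(* Probability vectors on Omega_n = 'I_n are row vectors 'rV[R]_n;
   functions on Omega_n are 'I_n -> R. *)

Definition probs (R : realType) (n : nat) : set 'rV[R]_n :=
  [set p | (forall i, 0 < p ord0 i) /\ \sum_(i < n) p ord0 i = 1].
Arguments probs {R} n _.

Definition bform (R : realType) (n : nat) (M : 'M[R]_n) (A B : 'I_n -> R) : R :=
  \sum_(i < n) \sum_(j < n) A i * M i j * B j.

Definition expect (R : realType) (n : nat) (p : 'rV[R]_n) (A : 'I_n -> R) : R :=
  \sum_(w < n) p ord0 w * A w.

Definition cov (R : realType) (n : nat) (p : 'rV[R]_n) (A B : 'I_n -> R) : R :=
  \sum_(w < n) p ord0 w * (A w - expect p A) * (B w - expect p B).

Definition pushf (R : realType) (n m : nat) (F : 'I_n -> 'I_m) (p : 'rV[R]_n)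
  : 'rV[R]_m := \row_(x < m) \sum_(y < n | F y == x) p ord0 y.

(* Hypothesis (ii-1) makes every row of the matrix of gamma_{n,p} sum to 0,
   and (ii-2) applied to permutations makes gamma_n at the uniform
   distribution u_n permutation invariant; together they force
   gamma_{n,u_n} = c_n Cov_{u_n}.  The uniform distribution on 2n points
   collapses onto both u_n and u_2, so c_n = c_2 =: c.  Collapsing blocks of
   sizes a_1, ..., a_n of a uniform distribution produces every distribution
   with rational weights, where gamma = c Cov again by (ii-2) and the
   push-forward invariance of Cov; these are dense in P_n, and continuity of
   gamma_n concludes.  The converse is push-forward invariance of Cov. *)

From HB Require Import structures.
From mathcomp Require Import all_boot all_order all_algebra.
From mathcomp Require Import all_classical all_reals all_analysis.
From mathcomp Require Import fingroup perm ring lra.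
Import Order.TTheory GRing.Theory Num.Theory.
Import numFieldNormedType.Exports.
Local Open Scope ring_scope.
Local Open Scope classical_set_scope.

Lemma leq_of_surj {n m} {F : 'I_n -> 'I_m} : (forall x, exists y, F y = x) -> (m <= n)%N.
Proof.
move=> Fsurj; rewrite -[m]card_ord -[n]card_ord.
apply: leq_trans (leq_image_card F _); apply: subset_leq_card.
by apply/fintype.subsetP => x _; have [y <-] := Fsurj x; apply: codom_f.
Qed.

Lemma perm_invariant_offdiag (T : finType) (V : Type) (M : T -> T -> V) :
  (forall (s : {perm T}) i j, M (s i) (s j) = M i j) ->
  forall i j i' j', i != j -> i' != j' -> M i j = M i' j'.
Proof.
move=> Minv i j i' j' ij i'j'.
rewrite -(Minv (tperm i i')) tpermL.
set k := tperm i i' j.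
have i'k : i' != k by rewrite -[i'](tpermL i i') (inj_eq perm_inj).
by rewrite -(Minv (tperm k j')) tpermL tpermD // eq_sym.
Qed.

Section Covariance.
Context {R : realType}.
Implicit Types (n m : nat) (c : R).

Definition covm {n} (p : 'rV[R]_n) : 'M[R]_n :=
  \matrix_(i, j) (p ord0 i * ((i == j)%:R - p ord0 j)).

Definition delta {n} (x : 'I_n) : 'I_n -> R := fun i => (i == x)%:R.

Definition unif n : 'rV[R]_n := const_mx n%:R^-1.

Lemma bformZ n c (M : 'M[R]_n) A B : bform (c *: M) A B = c * bform M A B.
Proof.
rewrite /bform mulr_sumr; apply: eq_bigr => i _.
by rewrite mulr_sumr; apply: eq_bigr => j _; rewrite mxE; ring.
Qed.

Lemma sum_delta n (i : 'I_n) (f : 'I_n -> R) : \sum_j delta i j * f j = f i.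
Proof.
rewrite (bigD1 i) //= [X in _ + X]big1 ?addr0 /delta ?eqxx ?mul1r //.
by move=> j /negbTE ->; rewrite mul0r.
Qed.

Lemma bform_deltal n (M : 'M[R]_n) x B : bform M (delta x) B = \sum_j M x j * B j.
Proof.
rewrite /bform (eq_bigr (fun i => delta x i * \sum_j M i j * B j)).
  by rewrite sum_delta.
by move=> i _; rewrite mulr_sumr; apply: eq_bigr => j _; rewrite mulrA.
Qed.

Lemma bform_delta n (M : 'M[R]_n) x y : bform M (delta x) (delta y) = M x y.
Proof.
rewrite bform_deltal (eq_bigr (fun j => delta y j * M x j)) ?sum_delta //.
by move=> j _; rewrite mulrC.
Qed.

Lemma cov_bformE n (p : 'rV[R]_n) A B : \sum_i p ord0 i = 1 ->
  cov p A B = bform (covm p) A B.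
Proof.
move=> p1; rewrite /cov /bform /expect.
set a := \sum_w p ord0 w * A w; set b := \sum_w p ord0 w * B w.
transitivity (\sum_w p ord0 w * A w * B w - a * b).
  rewrite (eq_bigr (fun w => p ord0 w * A w * B w - b * (p ord0 w * A w)
     - a * (p ord0 w * B w) + a * b * p ord0 w)); last by move=> w _; ring.
  by rewrite big_split /= !sumrB -!mulr_sumr p1 -/a -/b; ring.
rewrite /a mulr_suml -sumrB; apply: eq_bigr => i _.
rewrite (eq_bigr (fun j => delta i j * (p ord0 i * A i * B j)
                            - p ord0 i * A i * (p ord0 j * B j))); last first.
  by move=> j _; rewrite mxE /delta eq_sym; ring.
by rewrite sumrB sum_delta -mulr_sumr -/b; ring.
Qed.

Lemma cov_const n (p : 'rV[R]_n) A c : \sum_i p ord0 i = 1 ->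
  cov p A (fun _ => c) = 0.
Proof.
move=> p1; rewrite /cov /expect -[\sum_w p ord0 w * c]mulr_suml p1 mul1r.
by rewrite big1 // => w _; rewrite subrr mulr0.
Qed.

Lemma sum_pushf {n m} (F : 'I_n -> 'I_m) (p : 'rV[R]_n) (g : 'I_m -> R) :
  \sum_x pushf F p ord0 x * g x = \sum_y p ord0 y * g (F y).
Proof.
rewrite (partition_big F xpredT) //=; apply: eq_bigr => x _.
by rewrite mxE mulr_suml; apply: eq_bigr => y /eqP ->.
Qed.

Lemma cov_pushf {n m} (F : 'I_n -> 'I_m) (p : 'rV[R]_n) A B :
  cov (pushf F p) A B = cov p (A \o F) (B \o F).
Proof.
rewrite /cov /expect !sum_pushf.
under eq_bigr do rewrite -mulrA.
by rewrite sum_pushf; under [RHS]eq_bigr do rewrite -mulrA.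
Qed.

Lemma probs_pushf {n m} {F : 'I_n -> 'I_m} {p : 'rV[R]_n} :
  (forall x, exists y, F y = x) -> probs n p -> probs m (pushf F p).
Proof.
move=> Fsurj [p_gt0 p1]; split.
  move=> x; have [y <-] := Fsurj x.
  rewrite mxE (bigD1 y) //= ltr_pwDl //.
  by apply: sumr_ge0 => i _; apply: ltW.
have := sum_pushf F p (fun _ => 1).
under eq_bigr do rewrite mulr1; under [in RHS]eq_bigr do rewrite mulr1.
by rewrite p1.
Qed.

Lemma probs_lt1 {n} {p : 'rV[R]_n} j : (1 < n)%N -> probs n p -> p ord0 j < 1.
Proof.
move=> n_gt1 [p_gt0 <-]; rewrite (bigD1 j) //= ltrDl.
have [k kj] : exists k : 'I_n, k != j.
  have [->|j0] := eqVneq j (Ordinal (ltnW n_gt1)).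
    by exists (Ordinal n_gt1); rewrite -(inj_eq val_inj).
  by exists (Ordinal (ltnW n_gt1)); rewrite eq_sym.
rewrite (bigD1 k) //= ltr_pwDl //; apply: sumr_ge0 => i _; exact: ltW.
Qed.

Lemma probs_le1 {n} {p : 'rV[R]_n} j : probs n p -> p ord0 j <= 1.
Proof.
move=> [p_gt0 <-]; rewrite (bigD1 j) //= lerDl.
by apply: sumr_ge0 => i _; apply: ltW.
Qed.

Lemma scale_covm_inj n (p : 'rV[R]_n) c c' : (1 < n)%N -> probs n p ->
  c *: covm p = c' *: covm p -> c = c'.
Proof.
move=> n_gt1 pP /matrixP /(_ (Ordinal (ltnW n_gt1)) (Ordinal (ltnW n_gt1))).
rewrite !mxE eqxx; apply: mulIf; apply/lt0r_neq0/mulr_gt0; first by case: pP.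
by rewrite subr_gt0 probs_lt1.
Qed.

Lemma unif_probs {n} : (0 < n)%N -> probs n (unif n).
Proof.
move=> n_gt0; split=> [i|]; first by rewrite mxE invr_gt0 ltr0n.
under eq_bigr do rewrite mxE.
by rewrite sumr_const card_ord -[_ *+ n]mulr_natr mulVf // pnatr_eq0 -lt0n.
Qed.

Lemma delta_comp_perm n (s : {perm 'I_n}) x : delta x \o s = delta (s^-1 x)%g.
Proof. by apply: funext => w; rewrite /delta /= (canF_eq (permK s)). Qed.

Lemma pushf_perm_unif n (s : {perm 'I_n}) : pushf s (unif n) = unif n.
Proof.
apply/rowP => x; rewrite !mxE (big_pred1 (s^-1 x)%g) ?mxE // => y.
by rewrite /= (canF_eq (permK s)).
Qed.

Lemma covm_unif_of_perm_invariant n (M : 'M[R]_n) : (1 < n)%N ->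
  (forall (s : {perm 'I_n}) i j, M (s i) (s j) = M i j) ->
  (forall i, \sum_j M i j = 0) ->
  exists c, M = c *: covm (unif n).
Proof.
move=> n_gt1 Minv Mrow.
pose i0 := Ordinal (ltnW n_gt1); pose i1 := Ordinal n_gt1.
pose b := M i0 i1.
have Moff i j : i != j -> M i j = b.
  by move=> ij; apply: (@perm_invariant_offdiag _ _ (fun i j => M i j) Minv).
have Mdiag i : M i i = - (b *+ n.-1).
  have := Mrow i; rewrite (bigD1 i) //= (eq_bigr (fun _ => b)); last first.
    by move=> j ji; rewrite Moff // eq_sym.
  have := sumr_const [pred j | j != i] b; rewrite cardC1 card_ord /= => ->.
  by move/eqP; rewrite addr_eq0 => /eqP.
have n0 : n%:R != 0 :> R by rewrite pnatr_eq0 -lt0n ltnW.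
have nE : n%:R = n.-1%:R + 1 :> R by rewrite natr1 prednK // ltnW.
exists (- n%:R ^+ 2 * b); apply/matrixP => i j; rewrite !mxE.
have [<-|ij] := eqVneq i j; first by rewrite Mdiag -mulr_natr /= nE; field.
by rewrite Moff //=; field.
Qed.

(* [tagnat.sig1] maps 'I_(\sum_i a i) onto 'I_n by collapsing consecutive
   blocks of sizes a 0, a 1, ... *)
Lemma sig1_surj {n} {a : 'I_n -> nat} : (forall x, 0 < a x)%N ->
  forall x, exists y, @tagnat.sig1 n a y = x.
Proof. by move=> a_gt0 x; exists (tagnat.Rank x (Ordinal (a_gt0 x))); rewrite tagnat.Rank1K. Qed.

Lemma pushf_sig1_unif n (a : 'I_n -> nat) :
  pushf (@tagnat.sig1 n a) (unif _) = \row_x ((a x)%:R / (\sum_i a i)%:R).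
Proof.
apply/rowP => x; rewrite [LHS]mxE [RHS]mxE.
set c := _^-1; rewrite (eq_bigr (fun _ => c)) => [|y _]; last by rewrite mxE.
rewrite (reindex tagnat.rank) /=; last exact/onW_bij/tagnat.rank_bij.
under eq_bigl do rewrite /tagnat.sig1 tagnat.rankK.
have := @sig_big_dep R 0 +%R _ (fun i => 'I_(a i)) (pred1 x) (fun _ _ => true) (fun _ _ => c).
rewrite big_pred1_eq sumr_const card_ord mulr_natl => ->.
by apply: eq_bigl => t /=; rewrite andbT.
Qed.

Lemma pushf_sig1_unif_const n k : (0 < k)%N ->
  pushf (@tagnat.sig1 n (fun _ => k)) (unif _) = unif n.
Proof.
move=> k_gt0; rewrite pushf_sig1_unif; apply/rowP => x; rewrite !mxE.
rewrite sum_nat_const card_ord natrM invfM mulrCA mulfV ?mulr1 //.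
by rewrite pnatr_eq0 -lt0n.
Qed.

End Covariance.

Section Approximation.
Context {R : realType}.

Lemma rational_approx {n} {p : 'rV[R]_n} {d : R} : (0 < n)%N -> probs n p -> 0 < d ->
  exists2 a : 'I_n -> nat, (forall x, 0 < a x)%N &
    forall x, `|p ord0 x - (a x)%:R / (\sum_y a y)%:R| < d.
Proof.
move=> n_gt0 pP d_gt0.
have [k nd_k] : exists k : nat, n%:R / d < k%:R.
  by exists (Num.Def.archi_bound (n%:R / d)); apply/archi_boundP/divr_ge0/ltW.
set K : R := k%:R in nd_k.
have nKd : n%:R < K * d by rewrite -ltr_pdivrMr.
have K_gt0 : 0 < K by apply: le_lt_trans nd_k; apply/divr_ge0/ltW.
(* Rounding up K p_x changes each weight by at most 1, hence the normalized
   weights by about n / K < d. *)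
pose a x := (Num.truncn (K * p ord0 x)).+1.
exists a => // x.
have [p_gt0 p1] := pP.
have a_bnd y : K * p ord0 y < (a y)%:R /\ (a y)%:R <= K * p ord0 y + 1.
  have /andP[lb ub] := truncn_itv (mulr_ge0 (ltW K_gt0) (ltW (p_gt0 y))).
  by rewrite /a -[(Num.truncn _).+1]addn1 natrD; split => //; lra.
set S := (\sum_y a y)%:R.
have sumKp : \sum_y K * p ord0 y = K by rewrite -mulr_sumr p1 mulr1.
have KS : K <= S.
  by rewrite -sumKp /S natr_sum; apply: ler_sum => y _; exact: ltW (proj1 (a_bnd y)).
have SKn : S <= K + n%:R.
  have : S <= \sum_y (K * p ord0 y + 1).
    by rewrite /S natr_sum; apply: ler_sum => y _; exact: (proj2 (a_bnd y)).
  by rewrite big_split /= sumKp sumr_const card_ord.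
have S_gt0 : 0 < S by lra.
set P : R := p ord0 x; set A : R := (a x)%:R.
have [KPA AKP] : K * P < A /\ A <= K * P + 1 := a_bnd x.
have -> : P - A / S = (P * S - A) / S by rewrite mulrBl mulfK // lt0r_neq0.
rewrite normrM normfV (gtr0_norm S_gt0) ltr_pdivrMr //.
have P_ge0 : 0 <= P by exact: ltW (p_gt0 x).
have f1 : K * P <= S * P by apply: ler_wpM2r.
have f2 : S * P <= (K + n%:R) * P by apply: ler_wpM2r.
have f3 : n%:R * P <= n%:R by apply: ler_piMr; [exact: ler0n | exact: probs_le1].
have f4 : d * K <= d * S by apply: ler_wpM2l => //; exact: ltW.
have n_ge1 : 1 <= n%:R :> R by rewrite ler1n.
rewrite ltr_norml; apply/andP; split; lra.
Qed.

Lemma covm_lipschitz {n} {p q : 'rV[R]_n} {e : R} i j : probs n p -> probs n q ->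
  (forall y, `|p ord0 y - q ord0 y| < e) -> `|covm p i j - covm q i j| <= 2 * e.
Proof.
move=> pP qP pq_e.
have [p_gt0 _] := pP; have [q_gt0 _] := qP.
rewrite !mxE; set t : R := (i == j)%:R.
have -> : p ord0 i * (t - p ord0 j) - q ord0 i * (t - q ord0 j)
    = (p ord0 i - q ord0 i) * (t - p ord0 j) + q ord0 i * (q ord0 j - p ord0 j) by ring.
apply: le_trans (ler_normD _ _) _; rewrite !normrM.
have h1 : `|t - p ord0 j| <= 1.
  have := p_gt0 j; have := probs_le1 j pP.
  by rewrite /t; case: (i == j) => /= h h'; rewrite ler_norml; apply/andP; split; lra.
have h2 : `|q ord0 i| <= 1 by rewrite ger0_norm ?probs_le1 // ltW.
have h3 : `|q ord0 j - p ord0 j| <= e by rewrite distrC; apply: ltW.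
have h4 : `|p ord0 i - q ord0 i| <= e by apply: ltW.
have := ler_pM (normr_ge0 _) (normr_ge0 _) h4 h1.
have := ler_pM (normr_ge0 _) (normr_ge0 _) h2 h3.
lra.
Qed.

Lemma continuous_within_entrywise {n} {f : 'rV[R]_n -> 'M[R]_n} {A : set 'rV[R]_n} {p} :
  {within A, continuous f} -> A p -> forall e : R, 0 < e ->
  exists2 d : R, 0 < d & forall q, A q -> (forall j, `|p ord0 j - q ord0 j| < d) ->
     forall i j, `|f p i j - f q i j| < e.
Proof.
move=> /subspace_continuousP f_cont Ap e e_gt0.
have := f_cont p Ap _ (nbhsx_ballx (f p) e e_gt0).
rewrite /= nbhs_simpl /within /= => /nbhs_ballP[d /= d_gt0 fball].
exists d => // q Aq pq_d i j.
have /fball /(_ Aq) [_ /(_ i j)] // : ball p d q.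
by split => // i0 j0; rewrite (ord1 i0); exact: pq_d.
Qed.

End Approximation.

Section CovarianceCharacterization.
Context {R : realType} {gamma : forall n : nat, 'rV[R]_n -> 'M[R]_n}.
Hypothesis gamma_cont : forall n : nat, (1 < n)%N -> {within probs n, continuous (gamma n)}.
Hypothesis gamma_center : forall n : nat, (1 < n)%N -> forall p : 'rV[R]_n, probs n p ->
  forall A : 'I_n -> R, bform (gamma n p) A (fun _ => 1) = 0.
Hypothesis gamma_pushf : forall m n : nat, (1 < m)%N -> (m <= n)%N -> forall F : 'I_n -> 'I_m,
  (forall x : 'I_m, exists y : 'I_n, F y = x) ->
  forall p : 'rV[R]_n, probs n p -> forall A B : 'I_m -> R,
    bform (gamma m (pushf F p)) A B = bform (gamma n p) (A \o F) (B \o F).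

Lemma gamma_row_sum n (p : 'rV[R]_n) i : (1 < n)%N -> probs n p ->
  \sum_j gamma n p i j = 0.
Proof.
move=> n_gt1 pP; have := gamma_center _ n_gt1 _ pP (delta i).
by rewrite bform_deltal; under eq_bigr do rewrite mulr1.
Qed.

Lemma gamma_cov_pushf {N n} {F : 'I_N -> 'I_n} {p : 'rV[R]_N} {c} : (1 < n)%N ->
  (forall x, exists y, F y = x) -> probs N p -> gamma N p = c *: covm p ->
  gamma n (pushf F p) = c *: covm (pushf F p).
Proof.
move=> n_gt1 Fsurj pP gamma_p; apply/matrixP => x y.
have [_ p1] := pP; have [_ pF1] := probs_pushf Fsurj pP.
rewrite -[LHS]bform_delta (gamma_pushf _ _ n_gt1 (leq_of_surj Fsurj) _ Fsurj _ pP).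
rewrite gamma_p bformZ.
by rewrite -cov_bformE // -cov_pushf cov_bformE // -bformZ bform_delta.
Qed.

Lemma gamma_unif_perm n (s : {perm 'I_n}) i j : (1 < n)%N ->
  gamma n (unif n) (s i) (s j) = gamma n (unif n) i j.
Proof.
move=> n_gt1.
suff inv_gamma (t : {perm 'I_n}) : gamma n (unif n) (t^-1 i)%g (t^-1 j)%g = gamma n (unif n) i j.
  by rewrite -(inv_gamma s^-1%g) !invgK.
have tsurj x : exists y, t y = x by exists (t^-1 x)%g; rewrite permKV.
rewrite -bform_delta -!delta_comp_perm.
rewrite -(gamma_pushf _ _ n_gt1 (leqnn n) _ tsurj _ (unif_probs (ltnW n_gt1))).
by rewrite pushf_perm_unif bform_delta.
Qed.

Lemma gamma_unif_cov {n} : (1 < n)%N -> exists c, gamma n (unif n) = c *: covm (unif n).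
Proof.
move=> n_gt1; apply: covm_unif_of_perm_invariant => // [s i j|i].
  exact: gamma_unif_perm.
exact: gamma_row_sum n_gt1 (unif_probs (ltnW n_gt1)).
Qed.

Lemma gamma_unif_cov_sig1 {n k c} : (1 < n)%N -> (0 < k)%N ->
  gamma _ (unif (\sum_(i < n) k)) = c *: covm (unif _) ->
  gamma n (unif n) = c *: covm (unif n).
Proof.
move=> n_gt1 k_gt0 gamma_k; rewrite -(pushf_sig1_unif_const n k k_gt0).
have sig1S := sig1_surj (fun _ : 'I_n => k_gt0).
apply: (gamma_cov_pushf n_gt1 sig1S _ gamma_k); apply: unif_probs.
exact: leq_trans (ltnW n_gt1) (leq_of_surj sig1S).
Qed.

Lemma gamma_unif_cov_const :
  exists c, forall n, (1 < n)%N -> gamma n (unif n) = c *: covm (unif n).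
Proof.
have [c gamma2] := gamma_unif_cov (erefl : (1 < 2)%N).
exists c => n n_gt1.
have M_gt1 : (1 < \sum_(i < n) 2)%N by rewrite sum_nat_const card_ord muln2 -addnn ltn_addr.
have [cM gammaM] := gamma_unif_cov M_gt1.
have -> : c = cM.
  have eM : (\sum_(i < n) 2 = \sum_(i < 2) n)%N by rewrite !sum_nat_const !card_ord mulnC.
  rewrite eM in gammaM.
  have := gamma_unif_cov_sig1 (erefl : (1 < 2)%N) (ltnW n_gt1) gammaM.
  by rewrite gamma2; apply: scale_covm_inj; [|exact: unif_probs].
exact: gamma_unif_cov_sig1 n_gt1 (erefl : (0 < 2)%N) gammaM.
Qed.

Lemma gamma_cov_dense {c n} {p : 'rV[R]_n} {e : R} :
  (forall N, (1 < N)%N -> gamma N (unif N) = c *: covm (unif N)) ->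
  (1 < n)%N -> probs n p -> 0 < e ->
  exists2 q, probs n q & (forall y, `|p ord0 y - q ord0 y| < e) /\ gamma n q = c *: covm q.
Proof.
move=> gamma_unif n_gt1 pP e_gt0.
have [a a_gt0 pa_e] := rational_approx (ltnW n_gt1) pP e_gt0.
have sig1S := sig1_surj a_gt0.
have N_gt1 := leq_trans n_gt1 (leq_of_surj sig1S).
have unifP : probs _ (@unif R _) := unif_probs (ltnW N_gt1).
exists (pushf (@tagnat.sig1 n a) (unif _)); first exact: probs_pushf sig1S unifP.
split; last exact: gamma_cov_pushf n_gt1 sig1S unifP (gamma_unif _ N_gt1).
by move=> y; rewrite pushf_sig1_unif mxE.
Qed.

Lemma gamma_cov :
  exists c, forall n, (1 < n)%N -> forall p, probs n p -> gamma n p = c *: covm p.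
Proof.
have [c gamma_unif] := gamma_unif_cov_const.
exists c => n n_gt1 p pP; apply/matrixP => i j; rewrite [RHS]mxE.
apply/eqP; rewrite -subr_eq0 -normr_le0; apply/ler_addgt0Pr => e e_gt0.
rewrite add0r.
have K_gt0 : 0 < 1 + 2 * `|c| by rewrite ltr_pwDl // mulr_ge0.
set e' := e / (1 + 2 * `|c|).
have e'_gt0 : 0 < e' by rewrite divr_gt0.
have [d d_gt0 gamma_near] := continuous_within_entrywise (gamma_cont _ n_gt1) pP _ e'_gt0.
have min_gt0 : 0 < Num.min d e' by rewrite lt_min d_gt0 e'_gt0.
have [q qP [pq_close gamma_q]] := gamma_cov_dense gamma_unif n_gt1 pP min_gt0.
have pq_d y : `|p ord0 y - q ord0 y| < d by have := pq_close y; rewrite lt_min => /andP[].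
have pq_e' y : `|p ord0 y - q ord0 y| < e' by have := pq_close y; rewrite lt_min => /andP[].
have gamma_pq := gamma_near q qP pq_d i j.
have covm_pq := covm_lipschitz i j pP qP pq_e'.
have gamma_qij : gamma n q i j = c * covm q i j by rewrite gamma_q mxE.
have -> : gamma n p i j - c * covm p i j
    = (gamma n p i j - gamma n q i j) + c * (covm q i j - covm p i j).
  by rewrite gamma_qij; ring.
apply: le_trans (ler_normD _ _) _; rewrite normrM (distrC (covm q i j)).
have : `|c| * `|covm p i j - covm q i j| <= `|c| * (2 * e') by apply: ler_wpM2l.
have -> : e = e' * (1 + 2 * `|c|) by rewrite divfK // lt0r_neq0.
lra.
Qed.

End CovarianceCharacterization.

Theorem mainTheorem9 (R : realType) (gamma : forall n : nat, 'rV[R]_n -> 'M[R]_n)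
  (hcont : forall n : nat, (1 < n)%N -> {within probs n, continuous (gamma n)}) :
  (exists c : R, forall n : nat, (1 < n)%N -> forall p : 'rV[R]_n, probs n p ->
      forall A B : 'I_n -> R, bform (gamma n p) A B = c * cov p A B)
  <->
  ((forall n : nat, (1 < n)%N -> forall p : 'rV[R]_n, probs n p ->
      forall A : 'I_n -> R, bform (gamma n p) A (fun _ => 1) = 0)
   /\
   (forall m n : nat, (1 < m)%N -> (m <= n)%N -> forall F : 'I_n -> 'I_m,
      (forall x : 'I_m, exists y : 'I_n, F y = x) ->
      forall p : 'rV[R]_n, probs n p -> forall A B : 'I_m -> R,
        bform (gamma m (pushf F p)) A B = bform (gamma n p) (A \o F) (B \o F))).
Proof.
split=> [[c gamma_c]|[gamma_center gamma_pushf]].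
  split=> [n n_gt1 p pP A | m n m_gt1 mn F Fsurj p pP A B].
    by have [_ p1] := pP; rewrite gamma_c // cov_const // mulr0.
  rewrite gamma_c //; last exact: probs_pushf Fsurj pP.
  by rewrite gamma_c ?cov_pushf //; exact: leq_trans mn.
have [c gamma_c] := gamma_cov hcont gamma_center gamma_pushf.
exists c => n n_gt1 p pP A B.
have [_ p1] := pP.
by rewrite gamma_c // bformZ cov_bformE.
Qed.
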